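(* If $x \in \mathcal{A}_{\emptyset}$ satisfies $gx=h$ for some positive $g,h \in \mathcal{A}_{\emptyset}$ with $g \neq 0$, then $x$ is positive.
   Context: All graphs are finite and simple; $\emptyset$ denotes the graph with no vertices. For graphs $H,G$, $t(H;G)$ is the probability that a uniformly random map $V(H)\to V(G)$ is a homomorphism; $t(\emptyset;G)=1$. A partially labeled graph is a graph in which some vertices carry distinct positive-integer labels. $\mathcal{F}$ is the set of partially labeled graphs up to label-preserving isomorphism, and $\mathcal{F}_L$ those whose label set is exactly the finite set $L\subset\mathbb{N}$. The product $H_1\cdot H_2$ is the disjoint union with equally labeled vertices identified (multiple edges merged). $\mathbb{R}[\mathcal{F}]$ is the algebra of finite formal real linear combinations of elements of $\mathcal{F}$ with this product extended bilinearly, and $\mathbb{R}[\mathcal{F}_L]$ the subalgebra spanned by $\mathcal{F}_L$. For $H\in\mathcal{F}_L$, a graph $G$ and $\phi:L\to V(G)$, $t(H;G,\phi)$ is the probability that the map sending each labeled vertex with label $\ell$ to $\phi(\ell)$ and each unlabeled vertex to an independent uniform random vertex of $G$ is a homomorphism; this is extended linearly. Let $\mathcal{K}$ be the ideal of $\mathbb{R}[\mathcal{F}]$ generated by $F-\emptyset$ for $F$ a one-vertex (labeled or unlabeled) graph; $\mathcal{A}=\mathbb{R}[\mathcal{F}]/\mathcal{K}$, $\mathcal{A}_L=\mathbb{R}[\mathcal{F}_L]/(\mathcal{K}\cap\mathbb{R}[\mathcal{F}_L])$. An element $f\in\mathcal{A}_L$ is positive if $t(f;G,\phi)\ge0$ for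 all graphs $G$ and all $\phi:L\to V(G)$; in particular $f\in\mathcal{A}_\emptyset$ is positive iff $t(f;G)\ge 0$ for every graph $G$. *)

From mathcomp Require Import all_boot all_order all_algebra all_fingroup.
From mathcomp Require Import reals.
From Stdlib Require List.
Set Implicit Arguments. Unset Strict Implicit. Unset Printing Implicit Defensive.
Import Order.TTheory GRing.Theory Num.Theory.
Local Open Scope ring_scope.

(* Vertices are 0 .. nv-1.  The edge set is the simple graph given by
   [edgeb] (symmetrised, loopless, restricted to the vertex range).
   [lab u = Some l] means vertex u carries label l; [None] = unlabeled. *)
Record plg := PLG { nv : nat; adj : nat -> nat -> bool; lab : nat -> option nat }.

Definition edgeb (H : plg) (u v : nat) : bool :=
  [&& (u < nv H)%N, (v < nv H)%N, u != v & adj H u v || adj H v u].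

Definition wf (H : plg) : Prop :=
  (forall u l, (u < nv H)%N -> lab H u = Some l -> (0 < l)%N) /\
  (forall u v, (u < nv H)%N -> (v < nv H)%N -> lab H u != None ->
      lab H u = lab H v -> u = v).

(* element of F_emptyset : no labeled vertex *)
Definition unlabeled (H : plg) : Prop := forall u, (u < nv H)%N -> lab H u = None.

Definition isob (H J : plg) : bool :=
  (nv H == nv J) &&
  [exists f : {perm 'I_(nv H)},
     [forall u : 'I_(nv H), (lab J (f u) == lab H u) &&
        [forall v : 'I_(nv H), edgeb J (f u) (f v) == edgeb H u v]]].

Definition haslab (H : plg) (l : nat) : bool :=
  has (fun u => lab H u == Some l) (iota 0 (nv H)).

(* ---------- product H1 . H2 : disjoint union, equally labeled vertices
   identified, multiple edges merged ---------- *)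
Definition newv (H1 H2 : plg) (u : nat) : bool :=
  if lab H2 u is Some l then ~~ haslab H1 l else true.
Definition news (H1 H2 : plg) : seq nat := [seq u <- iota 0 (nv H2) | newv H1 H2 u].
(* position in the product of vertex u of H2 *)
Definition posv (H1 H2 : plg) (u : nat) : nat :=
  if newv H1 H2 u then (nv H1 + index u (news H1 H2))%N
  else find (fun w => lab H1 w == lab H2 u) (iota 0 (nv H1)).
Definition gmul (H1 H2 : plg) : plg :=
  PLG (nv H1 + size (news H1 H2))
      (fun a b => [&& (a < nv H1)%N, (b < nv H1)%N & adj H1 a b] ||
         has (fun u => has (fun v => [&& adj H2 u v, posv H1 H2 u == a &
                                        posv H1 H2 v == b]) (iota 0 (nv H2)))
             (iota 0 (nv H2)))
      (fun a => if (a < nv H1)%N then lab H1 a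
                else lab H2 (nth 0%N (news H1 H2) (a - nv H1))).

Definition g0 : plg := PLG 0 (fun _ _ => false) (fun _ => None).
Definition vtx (o : option nat) : plg := PLG 1 (fun _ _ => false) (fun _ => o).

Section Alg.
Context {R : realType}.

(* ---------- R[F] : finite formal real linear combinations ---------- *)
Definition fsum := seq (R * plg).
Definition inF (s : fsum) : Prop := forall p, List.In p s -> wf p.2.
Definition inF0 (s : fsum) : Prop := forall p, List.In p s -> wf p.2 /\ unlabeled p.2.

Definition coef (s : fsum) (J : plg) : R := \sum_(p <- s | isob p.2 J) p.1.
Definition eqF (s1 s2 : fsum) : Prop := forall J, wf J -> coef s1 J = coef s2 J.

Definition scaleF (c : R) (s : fsum) : fsum := [seq (c * p.1, p.2) | p <- s].
Definition subF (s1 s2 : fsum) : fsum := s1 ++ scaleF (-1) s2.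
Definition mulF (s1 s2 : fsum) : fsum :=
  [seq (p.1 * q.1, gmul p.2 q.2) | p <- s1, q <- s2].

(* membership in the ideal K generated by F - emptyset, F one-vertex:
   s = sum_i c_i H_i (F_i - emptyset) in R[F]. *)
Definition inK (s : fsum) : Prop :=
  exists gens : seq (R * plg * option nat),
    (forall q, List.In q gens -> wf q.1.2 /\ wf (vtx q.2)) /\
    eqF s (flatten [seq scaleF q.1.1
                      (subF (mulF [:: (1, q.1.2)] [:: (1, vtx q.2)])
                            (mulF [:: (1, q.1.2)] [:: (1, g0)])) | q <- gens]).

Definition homb (H : plg) (T : finType) (e : rel T)
  (f : {ffun 'I_(nv H) -> T}) : bool :=
  [forall u : 'I_(nv H), forall v : 'I_(nv H), edgeb H u v ==> e (f u) (f v)].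

Definition tdens (H : plg) (T : finType) (e : rel T) : R :=
  (#|[pred f : {ffun 'I_(nv H) -> T} | homb e f]|)%:R / (#|T| ^ nv H)%:R.

Definition tval (s : fsum) (T : finType) (e : rel T) : R :=
  \sum_(p <- s) p.1 * tdens p.2 e.

(* positivity in A_emptyset: t(f;G) >= 0 for every (nonempty, finite, simple) G *)
Definition positive (s : fsum) : Prop :=
  forall (T : finType) (e : rel T), symmetric e -> irreflexive e ->
    (0 < #|T|)%N -> 0 <= tval s e.

End Alg.

From Pilot Require Import Defs.
From mathcomp Require Import all_boot all_order all_algebra all_fingroup.
From mathcomp Require Import reals zify ring lra polyrcf.
Set Implicit Arguments. Unset Strict Implicit. Unset Printing Implicit Defensive.
Import Order.TTheory GRing.Theory Num.Theory.
Local Open Scope ring_scope.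

(* If [g x - h] lies in K then t(g;G) t(x;G) = t(h;G) for every graph G.
   Suppose t(x;G1) < 0 and let G be any graph.  Write G_a for the disjoint union
   of G with the blow-up of G1 in which every vertex becomes an independent set
   of a twins.  For k large, (|G1| a + |G|)^k t(f;G_a) is a polynomial in a
   with leading coefficient |G1|^k t(f;G1) and constant term |G|^k t(f;G).  Hence
   t(x;G_a) < 0 for large a, which together with t(g;G_a), t(h;G_a) >= 0 forces
   t(g;G_a) = 0; so the polynomial attached to g vanishes identically and
   t(g;G) = 0.  Finally, a combination of unlabeled graphs all of whose
   densities vanish lies in K: padding with isolated vertices (which is free
   modulo K) brings all its graphs to a common size, and then Lovasz's argument
   (inclusion-exclusion to surjective homomorphism counts, and induction on the
   number of edges) shows that all its coefficients vanish.  Thus g = 0 in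
   A_emptyset, a contradiction. *)

Definition nhom (H : plg) (T : finType) (e : rel T) : nat :=
  #|[pred f : {ffun 'I_(nv H) -> T} | homb e f]|.

Definition surjb (m : nat) (T : finType) (f : {ffun 'I_m -> T}) : bool :=
  [forall y, exists x, f x == y].

(* Counts all homomorphisms when [surj] is false and the surjective ones when it
   is true, so that a single invariance proof serves both counts. *)
Definition nhomS (H : plg) (T : finType) (e : rel T) (surj : bool) : nat :=
  #|[pred f : {ffun 'I_(nv H) -> T} | homb e f && (surj ==> surjb f)]|.

Lemma nhomE (H : plg) (T : finType) (e : rel T) : nhom H e = nhomS H e false.
Proof. by apply: eq_card => f; rewrite !inE andbT. Qed.

Lemma tdensE (R : realType) (H : plg) (T : finType) (e : rel T) :
  @tdens R H T e = (nhom H e)%:R / (#|T| ^ nv H)%:R.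
Proof. by []. Qed.

Lemma edgeb_sym (H : plg) : symmetric (edgeb H).
Proof. by move=> u v; rewrite /edgeb eq_sym orbC; case: (u < nv H)%N; case: (v < nv H)%N. Qed.

Lemma edgeb_irr (H : plg) : irreflexive (edgeb H).
Proof. by move=> u; rewrite /edgeb eqxx !andbF. Qed.

Lemma nhom_edgeless (H : plg) (T : finType) (e : rel T) :
  (forall u v, (u < nv H)%N -> (v < nv H)%N -> edgeb H u v = false) ->
  nhom H e = (#|T| ^ nv H)%N.
Proof.
move=> noedge.
have -> : (#|T| ^ nv H)%N = #|{ffun 'I_(nv H) -> T}| by rewrite card_ffun card_ord.
by apply: eq_card => f; rewrite !inE; apply/forallP => u; apply/forallP => v; rewrite noedge.
Qed.

Lemma nhom_vtx (o : option nat) (T : finType) (e : rel T) : nhom (vtx o) e = #|T|.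
Proof.
rewrite nhom_edgeless /= ?expn1 // => u v; rewrite /edgeb /= !ltnS !leqn0.
by move=> /eqP -> /eqP ->.
Qed.

Lemma nhom_embed (H : plg) (T' T'' : finType) (e' : rel T') (e'' : rel T'')
    (i : T' -> T'') (P : pred T'') :
  injective i -> (forall x y, e'' (i x) (i y) = e' x y) -> (forall x, P (i x)) ->
  (forall y, P y -> exists x, i x = y) ->
  #|[pred f : {ffun 'I_(nv H) -> T''} | homb e'' f && [forall u, P (f u)]]| = nhom H e'.
Proof.
move=> inj_i ei Pi Pimage.
pose c (f : {ffun 'I_(nv H) -> T'}) : {ffun 'I_(nv H) -> T''} := [ffun u => i (f u)].
have c_inj : injective c.
  move=> f g /ffunP Efg; apply/ffunP => u; apply: inj_i.
  by have := Efg u; rewrite !ffunE.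
have homb_c f : homb e'' (c f) = homb e' f.
  by apply: eq_forallb => u; apply: eq_forallb => v; rewrite !ffunE ei.
rewrite /nhom.
transitivity #|[set c f | f in [set f : {ffun 'I_(nv H) -> T'} | homb e' f]]|;
  last by rewrite (card_imset _ c_inj) cardsE.
apply: eq_card => f; rewrite !inE.
apply/andP/imsetP => [[homf /forallP inP]|[f' homf' ->]].
  have [g Hg] := fin_all_exists (fun u => Pimage _ (inP u)).
  have Ef : c (finfun g) = f by apply/ffunP => u; rewrite !ffunE Hg.
  by exists (finfun g); rewrite // inE -homb_c Ef.
rewrite inE in homf'; rewrite homb_c; split=> //.
by apply/forallP => u; rewrite ffunE.
Qed.

Section DisjointUnion.
Variables (nb nc : nat) (T : finType).

Definition ffun_join (f1 : {ffun 'I_nb -> T}) (f2 : {ffun 'I_nc -> T}) :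
    {ffun 'I_(nb + nc) -> T} :=
  [ffun i => match split i with inl j => f1 j | inr k => f2 k end].

Lemma ffun_joinl f1 f2 j : ffun_join f1 f2 (lshift nc j) = f1 j.
Proof. by rewrite ffunE (unsplitK (inl _ j)). Qed.

Lemma ffun_joinr f1 f2 j : ffun_join f1 f2 (rshift nb j) = f2 j.
Proof. by rewrite ffunE (unsplitK (inr _ j)). Qed.

Lemma ffun_join_split (f : {ffun 'I_(nb + nc) -> T}) :
  ffun_join [ffun j => f (lshift nc j)] [ffun k => f (rshift nb k)] = f.
Proof.
apply/ffunP => i; rewrite !ffunE; case: splitP => [j|k] /= Hi; rewrite ffunE;
  by congr (fun_of_fin f _); apply: val_inj; rewrite /= Hi.
Qed.

Lemma ffun_join_inj : injective (fun p => ffun_join p.1 p.2).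
Proof.
move=> [f1 f2] [g1 g2] /= E; congr pair; apply/ffunP => j.
  by rewrite -(ffun_joinl f1 f2) E ffun_joinl.
by rewrite -(ffun_joinr f1 f2) E ffun_joinr.
Qed.

End DisjointUnion.

Lemma nhom_disjoint_union (A B C : plg) (T : finType) (e : rel T) :
  nv A = (nv B + nv C)%N ->
  (forall a b, (a < nv B)%N -> (b < nv B)%N -> edgeb A a b = edgeb B a b) ->
  (forall a b, (a < nv C)%N -> (b < nv C)%N ->
     edgeb A (nv B + a) (nv B + b) = edgeb C a b) ->
  (forall a b, (a < nv B)%N -> (b < nv C)%N ->
     edgeb A a (nv B + b) = false /\ edgeb A (nv B + b) a = false) ->
  nhom A e = (nhom B e * nhom C e)%N.
Proof.
case: A => [n a l] /= En; subst n => edgeB edgeC edgeBC.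
set A := PLG _ _ _.
have homb_join f1 f2 :
    homb e (ffun_join f1 f2 : {ffun 'I_(nv A) -> T}) = homb e f1 && homb e f2.
  apply/idP/andP => [/forallP homf|[/forallP hom1 /forallP hom2]].
    split; apply/forallP => u; apply/forallP => v; apply/implyP => Euv.
    - have := forallP (homf (lshift (nv C) u)) (lshift (nv C) v).
      by rewrite /= edgeB // Euv !ffun_joinl.
    - have := forallP (homf (rshift (nv B) u)) (rshift (nv B) v).
      by rewrite /= edgeC // Euv !ffun_joinr.
  apply/forallP => u; apply/forallP => v; apply/implyP; rewrite !ffunE.
  case: splitP => [j|k] /= ->; case: splitP => [j'|k'] /= ->.
  - by rewrite edgeB // => E; exact: (implyP (forallP (hom1 j) j') E).
  - by rewrite (edgeBC _ _ (ltn_ord j) (ltn_ord k')).1.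
  - by rewrite (edgeBC _ _ (ltn_ord j') (ltn_ord k)).2.
  - by rewrite edgeC // => E; exact: (implyP (forallP (hom2 k) k') E).
rewrite /nhom.
have -> : #|[pred f : {ffun 'I_(nv A) -> T} | homb e f]| =
    #|[set ffun_join p.1 p.2 | p in setX [set f : {ffun 'I_(nv B) -> T} | homb e f]
                                          [set f : {ffun 'I_(nv C) -> T} | homb e f]]|.
  apply: eq_card => f; rewrite !inE; apply/idP/imsetP => [homf|[[f1 f2]]].
    exists ([ffun j => f (lshift (nv C) j)], [ffun k => f (rshift (nv B) k)]);
      last by rewrite ffun_join_split.
    by rewrite !inE -homb_join ffun_join_split.
  by rewrite !inE /= => homf ->; rewrite homb_join.
by rewrite (card_imset _ (@ffun_join_inj _ _ _)) cardsX !cardsE.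
Qed.

Lemma isob_refl (H : plg) : isob H H.
Proof.
apply/andP; split => //; apply/existsP; exists 1%g; apply/forallP => u.
by rewrite perm1 eqxx /=; apply/forallP => v; rewrite perm1.
Qed.

Lemma isob_sym (H J : plg) : isob H J -> isob J H.
Proof.
case: H J => [n a l] [n' a' l']; rewrite /isob /=; case/andP => /eqP E; subst n'.
move/existsP => [s /forallP Hs]; apply/andP; split => //.
apply/existsP; exists s^-1%g; apply/forallP => u.
have := Hs (s^-1 u)%g; rewrite permKV; case/andP => /eqP <- /forallP He.
rewrite eqxx /=; apply/forallP => v.
by have := He (s^-1 v)%g; rewrite permKV => /eqP ->.
Qed.

Lemma isob_trans (H J K : plg) : isob H J -> isob J K -> isob H K.
Proof.
case: H J K => [n a l] [n' a' l'] [n'' a'' l'']; rewrite /isob /=.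
case/andP => /eqP E; subst n'; move/existsP => [s /forallP Hs].
case/andP => /eqP E; subst n''; move/existsP => [t /forallP Ht].
apply/andP; split => //; apply/existsP; exists (s * t)%g; apply/forallP => u.
have /andP[/eqP labs /forallP edges] := Hs u.
have /andP[/eqP labt /forallP edget] := Ht (s u).
rewrite permM labt labs eqxx /=; apply/forallP => v.
by rewrite permM (eqP (edget (s v))) (eqP (edges v)).
Qed.

Lemma isob_ext (A B : plg) : nv A = nv B ->
  (forall u, (u < nv A)%N -> lab B u = lab A u) ->
  (forall u v, (u < nv A)%N -> (v < nv A)%N -> edgeb B u v = edgeb A u v) -> isob A B.
Proof.
move=> E labAB edgeAB; apply/andP; split; first by rewrite E.
apply/existsP; exists 1%g; apply/forallP => u; rewrite perm1 labAB // eqxx /=.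
by apply/forallP => v; rewrite perm1 edgeAB.
Qed.

Lemma nhomS_isob (H J : plg) (T : finType) (e : rel T) (surj : bool) :
  isob H J -> nhomS H e surj = nhomS J e surj.
Proof.
case: H J => [n a l] [n' a' l']; rewrite /isob /=; case/andP => /eqP E; subst n'.
move/existsP => [s /forallP Hs].
set H := PLG n a l; set J := PLG n a' l'.
have edge_s (u v : 'I_n) : edgeb J (s u) (s v) = edgeb H u v.
  by have /andP[_ /forallP He] := Hs u; apply/eqP; exact: He.
pose c (f : {ffun 'I_(nv J) -> T}) : {ffun 'I_(nv H) -> T} := [ffun u => f (s u)].
have c_inj : injective c.
  move=> f g /ffunP Efg; apply/ffunP => u.
  by have := Efg (s^-1 u)%g; rewrite !ffunE permKV.
have pred_c f : homb e (c f) && (surj ==> surjb (c f)) = homb e f && (surj ==> surjb f).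
  congr andb.
    apply/forallP/forallP => homf u; apply/forallP => v.
      have := forallP (homf (s^-1 u)%g) (s^-1 v)%g.
      by rewrite !ffunE !permKV -edge_s !permKV.
    by have := forallP (homf (s u)) (s v); rewrite !ffunE edge_s.
  congr implb; apply/forallP/forallP => surjf y; have /existsP[x Hx] := surjf y.
    by apply/existsP; exists (s x); rewrite ffunE in Hx.
  by apply/existsP; exists (s^-1 x)%g; rewrite ffunE permKV.
rewrite /nhomS.
transitivity #|[set c f | f in [set f : {ffun 'I_(nv J) -> T} |
                                     homb e f && (surj ==> surjb f)]]|;
  last by rewrite (card_imset _ c_inj) cardsE.
apply: eq_card => g; rewrite !inE; apply/idP/imsetP => [Hg|[f]]; last first.
  by rewrite inE => Hf ->; rewrite pred_c.
have cg : c [ffun u => g (s^-1 u)%g] = g by apply/ffunP => u; rewrite !ffunE permK.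
by exists [ffun u => g (s^-1 u)%g]; rewrite // inE -pred_c cg.
Qed.

Lemma tdens_isob (R : realType) (H J : plg) (T : finType) (e : rel T) :
  isob H J -> @tdens R H T e = @tdens R J T e.
Proof.
move=> HJ; rewrite !tdensE !nhomE (nhomS_isob _ _ HJ).
by case/andP: HJ => /eqP ->.
Qed.

Lemma index_iota0 (u n : nat) : (u < n)%N -> index u (iota 0 n) = u.
Proof.
move=> Hu; have E := nth_iota 0 0 Hu; rewrite add0n in E.
by rewrite -{1}E index_uniq ?size_iota ?iota_uniq.
Qed.

Section ProductWithNewVertices.
Variables (H1 H2 : plg).
Hypothesis H2_new : forall u, (u < nv H2)%N -> newv H1 H2 u.

Lemma news_all : news H1 H2 = iota 0 (nv H2).
Proof. by apply/all_filterP/allP => u; rewrite mem_iota add0n; exact: H2_new. Qed.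

Lemma posv_new (u : nat) : (u < nv H2)%N -> posv H1 H2 u = (nv H1 + u)%N.
Proof. by move=> Hu; rewrite /posv H2_new // news_all index_iota0. Qed.

Lemma gmul_nv : nv (gmul H1 H2) = (nv H1 + nv H2)%N.
Proof. by rewrite /= news_all size_iota. Qed.

Local Notation adj2 a b :=
  (has (fun u => has (fun v => [&& adj H2 u v, posv H1 H2 u == a & posv H1 H2 v == b])
                     (iota 0 (nv H2))) (iota 0 (nv H2))).

Lemma gmul_adj2_oldl (a b : nat) : (a < nv H1)%N -> adj2 a b = false.
Proof.
move=> Ha; apply/negbTE/hasPn => u; rewrite mem_iota add0n => Hu.
apply/hasPn => v _; rewrite posv_new //.
have -> : (nv H1 + u == a) = false by apply/eqP; lia.
by rewrite andFb andbF.
Qed.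

Lemma gmul_adj2_oldr (a b : nat) : (b < nv H1)%N -> adj2 a b = false.
Proof.
move=> Hb; apply/negbTE/hasPn => u _; apply/hasPn => v; rewrite mem_iota add0n => Hv.
rewrite (posv_new Hv).
have -> : (nv H1 + v == b) = false by apply/eqP; lia.
by rewrite !andbF.
Qed.

Lemma gmul_adj2_new (a b : nat) : (a < nv H2)%N -> (b < nv H2)%N ->
  adj2 (nv H1 + a) (nv H1 + b) = adj H2 a b.
Proof.
move=> Ha Hb; apply/hasP/idP => [[u]|adj_ab].
  rewrite mem_iota add0n => Hu /hasP [v]; rewrite mem_iota add0n => Hv.
  by rewrite !posv_new // !eqn_add2l => /and3P[? /eqP <- /eqP <-].
exists a; first by rewrite mem_iota add0n.
by apply/hasP; exists b; rewrite ?mem_iota ?add0n // !posv_new // !eqxx adj_ab.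
Qed.

Lemma gmul_edgel (a b : nat) : (a < nv H1)%N -> (b < nv H1)%N ->
  edgeb (gmul H1 H2) a b = edgeb H1 a b.
Proof.
by move=> Ha Hb; rewrite /edgeb gmul_nv /= !gmul_adj2_oldl // !orbF Ha Hb !ltn_addr.
Qed.

Lemma gmul_edger (a b : nat) : (a < nv H2)%N -> (b < nv H2)%N ->
  edgeb (gmul H1 H2) (nv H1 + a) (nv H1 + b) = edgeb H2 a b.
Proof.
move=> Ha Hb; rewrite /edgeb gmul_nv /= !gmul_adj2_new // !ltn_add2l Ha Hb eqn_add2l /=.
by rewrite !(ltnNge (nv H1 + _)) !leq_addr.
Qed.

Lemma gmul_edge_cross (a b : nat) : (a < nv H1)%N -> (b < nv H2)%N ->
  edgeb (gmul H1 H2) a (nv H1 + b) = false /\ edgeb (gmul H1 H2) (nv H1 + b) a = false.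
Proof.
move=> Ha Hb; rewrite /edgeb /= gmul_adj2_oldl // gmul_adj2_oldr //.
by rewrite !(ltnNge (nv H1 + _)) !leq_addr /= !andbF.
Qed.

Lemma nhom_gmul_new (T : finType) (e : rel T) :
  nhom (gmul H1 H2) e = (nhom H1 e * nhom H2 e)%N.
Proof.
apply: nhom_disjoint_union; first exact: gmul_nv.
- exact: gmul_edgel.
- exact: gmul_edger.
- exact: gmul_edge_cross.
Qed.

End ProductWithNewVertices.

Lemma tdens_gmul_new (R : realType) (H1 H2 : plg) (T : finType) (e : rel T) :
  (forall u, (u < nv H2)%N -> newv H1 H2 u) ->
  @tdens R (gmul H1 H2) T e = @tdens R H1 T e * @tdens R H2 T e.
Proof.
move=> H2_new; rewrite !tdensE (nhom_gmul_new H2_new) (gmul_nv H2_new).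
by rewrite expnD !natrM invfM mulrACA.
Qed.

Lemma gmul_g0_isob (H : plg) : isob (gmul H g0) H.
Proof.
apply/isob_sym/isob_ext => [|u Hu|u v Hu Hv]; first by rewrite /= addn0.
  by rewrite /= Hu.
by rewrite /edgeb /= addn0 Hu Hv /= !orbF.
Qed.

Lemma news_vtx (H : plg) (o : option nat) :
  news H (vtx o) = if newv H (vtx o) 0 then [:: 0%N] else [::].
Proof. by rewrite /news /=; case: newv. Qed.

Lemma gmul_vtx_old_isob (H : plg) (o : option nat) :
  newv H (vtx o) 0 = false -> isob (gmul H (vtx o)) H.
Proof.
move=> old; apply/isob_sym/isob_ext => [|u Hu|u v Hu Hv].
- by rewrite /= news_vtx old addn0.
- by rewrite /= Hu.
- by rewrite /edgeb /= news_vtx old addn0 Hu Hv /= !orbF.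
Qed.

Lemma tdens_gmul_g0 (R : realType) (H : plg) (T : finType) (e : rel T) :
  @tdens R (gmul H g0) T e = @tdens R H T e.
Proof. exact/tdens_isob/gmul_g0_isob. Qed.

Lemma tdens_gmul_vtx (R : realType) (H : plg) (o : option nat) (T : finType) (e : rel T) :
  (0 < #|T|)%N -> @tdens R (gmul H (vtx o)) T e = @tdens R H T e.
Proof.
move=> T0; case new0: (newv H (vtx o) 0); last exact/tdens_isob/gmul_vtx_old_isob.
rewrite tdens_gmul_new => [|u]; last by rewrite /= ltnS leqn0 => /eqP ->.
rewrite [tdens (vtx o) e]tdensE nhom_vtx /= expn1 divff ?mulr1 //.
by rewrite pnatr_eq0 -lt0n.
Qed.

Lemma unlabeled_wf (H : plg) : unlabeled H -> wf H.
Proof. by move=> unlH; split=> [u l Hu|u v Hu _]; rewrite unlH. Qed.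

Lemma news_lt (H1 H2 : plg) (i : nat) :
  (i < size (news H1 H2))%N -> (nth 0%N (news H1 H2) i < nv H2)%N.
Proof.
move=> Hi; have := mem_nth 0%N Hi; rewrite /news mem_filter mem_iota add0n.
by case/andP.
Qed.

Lemma unlabeled_gmul (H1 H2 : plg) :
  unlabeled H1 -> unlabeled H2 -> unlabeled (gmul H1 H2).
Proof.
move=> unl1 unl2 a /=; case: ifP => Ha lt_a; first exact: unl1.
by apply/unl2/news_lt; rewrite ltn_subLR // leqNgt Ha.
Qed.

Lemma wf_gmul_g0 (H : plg) : wf H -> wf (gmul H g0).
Proof.
move=> [W1 W2]; split => /= [u l|u v]; rewrite addn0 => Hu; rewrite Hu; first exact: W1.
by move=> Hv; rewrite Hv; exact: W2.
Qed.

Lemma wf_gmul_vtx (H : plg) (o : option nat) : wf H -> wf (vtx o) -> wf (gmul H (vtx o)).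
Proof.
move=> [W1 W2] [V1 _]; case new0: (newv H (vtx o) 0); last first.
  have Env : nv (gmul H (vtx o)) = nv H by rewrite /= news_vtx new0 addn0.
  split => [u l|u v]; rewrite Env => Hu /=; rewrite Hu; first exact: W1.
  by move=> Hv; rewrite Hv; exact: W2.
have Env : nv (gmul H (vtx o)) = (nv H).+1 by rewrite /= news_vtx new0 addn1.
have lab_new a : lab (gmul H (vtx o)) a = if (a < nv H)%N then lab H a else o by [].
have o_fresh u : (u < nv H)%N -> lab H u != None -> lab H u != o.
  move: new0; rewrite /newv /=; case: o {V1 lab_new Env} => [l|] //= fresh Hu _.
  by apply: contraNneq fresh => labu; apply/hasP; exists u; rewrite ?mem_iota ?labu.
have top a : (a < (nv H).+1)%N -> ~~ (a < nv H)%N -> a = nv H.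
  by rewrite ltnS leq_eqVlt => /orP[/eqP ->|->].
split => [u l|u v]; rewrite Env => Hu; [|move=> Hv]; rewrite !lab_new.
  by case: ifP => Hu'; [exact: W1 | exact: (V1 0%N l)].
case: ifP => Hu'; case: ifP => Hv'.
- exact: W2.
- by move=> labu /esym /eqP; rewrite eq_sym (negbTE (o_fresh _ Hu' labu)).
- by move=> labo labv; move: (o_fresh _ Hv'); rewrite -labv labo => /(_ isT) /eqP.
- by move=> _ _; rewrite (top u) ?Hu' // (top v) ?Hv'.
Qed.

Section TvalLinear.
Variables (R : realType) (T : finType) (e : rel T).

Lemma tval_cat (s1 s2 : @fsum R) : Defs.tval (s1 ++ s2) e = Defs.tval s1 e + Defs.tval s2 e.
Proof. by rewrite /Defs.tval big_cat. Qed.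

Lemma tval_scale (c : R) (s : @fsum R) : Defs.tval (scaleF c s) e = c * Defs.tval s e.
Proof. by rewrite /Defs.tval big_map mulr_sumr; apply: eq_bigr => p _ /=; rewrite mulrA. Qed.

Lemma tval_sub (s1 s2 : @fsum R) : Defs.tval (subF s1 s2) e = Defs.tval s1 e - Defs.tval s2 e.
Proof. by rewrite /subF tval_cat tval_scale mulN1r. Qed.

Lemma tval_mulF (s1 s2 : @fsum R) : (forall q, List.In q s2 -> unlabeled q.2) ->
  Defs.tval (mulF s1 s2) e = Defs.tval s1 e * Defs.tval s2 e.
Proof.
move=> unl2; rewrite /Defs.tval /mulF big_allpairs_dep /= big_distrl /=.
apply: eq_bigr => p _; rewrite big_distrr /=.
elim: s2 unl2 => [|q s2 IH] unl2; first by rewrite !big_nil.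
rewrite !big_cons IH => [|r Hr]; last by apply: unl2; right.
rewrite tdens_gmul_new; first by rewrite mulrACA.
by move=> u Hu; rewrite /newv unl2 //; left.
Qed.

End TvalLinear.

Lemma In_cat (I : Type) (x : I) (s1 s2 : seq I) :
  List.In x (s1 ++ s2) <-> List.In x s1 \/ List.In x s2.
Proof. by split; [apply: List.in_app_or | apply: List.in_or_app]. Qed.

Lemma eq_big_In (R : nmodType) (I : Type) (s : seq I) (F G : I -> R) :
  (forall x, List.In x s -> F x = G x) -> \sum_(x <- s) F x = \sum_(x <- s) G x.
Proof.
elim: s => [|x s IH] FG; first by rewrite !big_nil.
by rewrite !big_cons FG ?IH // => [y Hy|]; [apply: FG; right | left].
Qed.

Lemma count_In_gt0 (I : Type) (P : pred I) (s : seq I) (x : I) :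
  List.In x s -> P x -> (0 < count P s)%N.
Proof.
elim: s => [|y s IH] //= [->|Hx] Px; first by rewrite Px.
by rewrite addnC ltn_addr // IH.
Qed.

Lemma has_In (I : Type) (P : pred I) (s : seq I) : has P s -> exists x, List.In x s /\ P x.
Proof.
elim: s => [|y s IH] //= /orP [Py|/IH [x [Hx Px]]]; first by exists y; split; [left|].
by exists x; split; [right|].
Qed.

Lemma In_allpairs (A B C : Type) (f : A -> B -> C) (s1 : seq A) (s2 : seq B) (p : C) :
  List.In p [seq f a b | a <- s1, b <- s2] ->
  exists a b, [/\ List.In a s1, List.In b s2 & p = f a b].
Proof.
elim: s1 => [|a s1 IH] //= /In_cat [/List.in_map_iff [b [<- Hb]]|/IH [a' [b [Ha Hb ->]]]].
  by exists a, b; split=> //; left.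
by exists a', b; split=> //; right.
Qed.

Lemma sum_if_const (R : nzSemiRingType) (I : Type) (s : seq I) (P : pred I) (c : R) :
  \sum_(q <- s) (if P q then c else 0) = c * (count P s)%:R.
Proof.
elim: s => [|x s IH]; first by rewrite big_nil mulr0.
by rewrite big_cons IH /= natrD mulrDr; case: (P x); rewrite ?mulr1 ?mulr0 ?add0r.
Qed.

Lemma coef_isob (R : realType) (s : @fsum R) (H J : plg) : isob H J -> coef s H = coef s J.
Proof.
move=> HJ; apply: eq_bigl => r; apply/idP/idP => Hr; first exact: isob_trans Hr HJ.
exact: isob_trans Hr (isob_sym HJ).
Qed.

Section IsoClassSum.
Variable R : realType.

Definition nisob (S : @fsum R) (J : plg) : nat := count (fun r : R * plg => isob r.2 J) S.

Lemma nisob_isob (S : @fsum R) (H J : plg) : isob H J -> nisob S J = nisob S H.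
Proof.
move=> HJ; apply: eq_count => r /=; apply/idP/idP => Hr; first exact: isob_trans Hr (isob_sym HJ).
exact: isob_trans Hr HJ.
Qed.

Variable phi : plg -> R.
Hypothesis phi_isob : forall H J, isob H J -> phi H = phi J.

(* Each term of [s] is spread evenly over the [nisob S] copies of its
   isomorphism class in [S], which makes the sum depend on [s] only through
   its coefficients. *)
Lemma sum_by_isoclass (s S : @fsum R) : (forall p, List.In p s -> List.In p S) ->
  \sum_(p <- s) p.1 * phi p.2 = \sum_(q <- S) coef s q.2 * phi q.2 / (nisob S q.2)%:R.
Proof.
move=> sS.
transitivity (\sum_(q <- S) \sum_(p <- s)
    (if isob p.2 q.2 then p.1 * (phi q.2 / (nisob S q.2)%:R) else 0)); last first.
  apply: eq_bigr => q _; rewrite /coef -[in RHS]mulrA [in RHS]big_distrl /= [in RHS]big_mkcond /=.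
  by apply: eq_bigr => p _; case: ifP; rewrite ?mul0r.
rewrite exchange_big /=; apply: eq_big_In => p Hp; symmetry.
transitivity (\sum_(q <- S) (if isob p.2 q.2 then p.1 * (phi p.2 / (nisob S p.2)%:R) else 0)).
  by apply: eq_bigr => q _; case: ifP => // Hpq; rewrite (phi_isob Hpq) (nisob_isob _ Hpq).
rewrite sum_if_const.
have -> : count (fun q : R * plg => isob p.2 q.2) S = nisob S p.2.
  by apply: eq_count => r /=; apply/idP/idP; exact: isob_sym.
have nisob_neq0 : (nisob S p.2)%:R != 0 :> R.
  by rewrite pnatr_eq0 -lt0n; apply: (count_In_gt0 (sS _ Hp)); exact: isob_refl.
by rewrite -!mulrA mulVf // mulr1.
Qed.

End IsoClassSum.

Lemma eqF_tval (R : realType) (s1 s2 : @fsum R) (T : finType) (e : rel T) :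
  (forall p, List.In p s1 -> wf p.2) -> (forall p, List.In p s2 -> wf p.2) ->
  eqF s1 s2 -> Defs.tval s1 e = Defs.tval s2 e.
Proof.
move=> wf1 wf2 E.
have tdens_iso H J : isob H J -> @tdens R H T e = tdens J e by exact: tdens_isob.
rewrite /Defs.tval (sum_by_isoclass tdens_iso (S := s1 ++ s2)) => [|p Hp]; last first.
  by apply/In_cat; left.
rewrite (sum_by_isoclass tdens_iso (s := s2) (S := s1 ++ s2)) => [|p Hp]; last first.
  by apply/In_cat; right.
apply: eq_big_In => q Hq; rewrite E //.
by case/In_cat: Hq; [apply: wf1 | apply: wf2].
Qed.

Definition Kgen (R : realType) (gens : seq (R * plg * option nat)) : @fsum R :=
  flatten [seq scaleF q.1.1
                      (subF (mulF [:: (1, q.1.2)] [:: (1, vtx q.2)])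
                            (mulF [:: (1, q.1.2)] [:: (1, g0)])) | q <- gens].

Lemma Kgen_cons (R : realType) (q : R * plg * option nat) (gens : seq (R * plg * option nat)) :
  Kgen (q :: gens) = [:: (q.1.1 * (1 * 1), gmul q.1.2 (vtx q.2));
                         (q.1.1 * (-1 * (1 * 1)), gmul q.1.2 g0)] ++ Kgen gens.
Proof. by []. Qed.

Lemma Kgen_wf (R : realType) (gens : seq (R * plg * option nat)) :
  (forall q, List.In q gens -> wf q.1.2 /\ wf (vtx q.2)) ->
  forall p, List.In p (Kgen gens) -> wf p.2.
Proof.
elim: gens => [|q gens IH] wf_gens p //; rewrite Kgen_cons => /In_cat [Hp|Hp].
  have [W1 W2] := wf_gens q (or_introl erefl).
  by case: Hp => [<-|[<-|//]] /=; [exact: wf_gmul_vtx | exact: wf_gmul_g0].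
by apply: IH => // r Hr; apply: wf_gens; right.
Qed.

Lemma tval_Kgen (R : realType) (gens : seq (R * plg * option nat)) (T : finType) (e : rel T) :
  (0 < #|T|)%N -> Defs.tval (Kgen gens) e = 0.
Proof.
move=> T0; elim: gens => [|q gens IH]; first by rewrite /Defs.tval big_nil.
rewrite Kgen_cons tval_cat IH addr0 /Defs.tval !big_cons big_nil /=.
by rewrite tdens_gmul_vtx // tdens_gmul_g0 !mulr1 addr0 mulrN1 mulNr subrr.
Qed.

Lemma inK_tval_eq0 (R : realType) (s : @fsum R) (T : finType) (e : rel T) :
  inF s -> inK s -> (0 < #|T|)%N -> Defs.tval s e = 0.
Proof.
move=> wf_s [gens [wf_gens E]] T0.
by rewrite (eqF_tval e _ (Kgen_wf wf_gens) E) ?tval_Kgen // => p /wf_s.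
Qed.

Lemma tval_mul_of_inK (R : realType) (x g h : @fsum R) (T : finType) (e : rel T) :
  inF0 x -> inF0 g -> inF0 h -> inK (subF (mulF g x) h) -> (0 < #|T|)%N ->
  Defs.tval g e * Defs.tval x e = Defs.tval h e.
Proof.
move=> Ix Ig Ih gxh T0; apply/eqP; rewrite -subr_eq0.
rewrite -(tval_mulF e g (fun q Hq => (Ix q Hq).2)) -tval_sub.
apply/eqP/(inK_tval_eq0 _ _ gxh T0) => p /In_cat [Hp|Hp].
  have [a [b [Ha Hb ->]]] := In_allpairs Hp.
  by apply/unlabeled_wf/unlabeled_gmul; [exact: (Ig _ Ha).2 | exact: (Ix _ Hb).2].
by have [q [<- Hq]] := proj1 (List.in_map_iff _ _ _) Hp; exact: (Ih _ Hq).1.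
Qed.

Lemma eq_cardT_forall (I : finType) (A : pred I) : (#|A| == #|I|) = [forall x, A x].
Proof.
apply/eqP/forallP => [cardA x|allA]; last by apply: eq_card => x; rewrite !inE; exact: allA.
have := cardC A; rewrite cardA -{2}(addn0 #|I|) => /eqP; rewrite eqn_add2l => /eqP /card0_eq.
by move=> /(_ x); rewrite !inE => /negbFE.
Qed.

Lemma eq_card0_forall (I : finType) (A : pred I) : (#|A| == 0%N) = [forall x, ~~ A x].
Proof.
apply/eqP/forallP => [/card0_eq A0 x|noA].
  by have := A0 x; rewrite !inE /= => /negbT.
by apply: eq_card0 => x; rewrite !inE; exact: negbTE (noA x).
Qed.

Lemma sum_bool_card (I : finType) (P Q : pred I) :
  (\sum_(i | P i) (Q i : nat))%N = #|[pred i | P i && Q i]|.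
Proof. by rewrite -sum1_card big_mkcondr /=; apply: eq_bigr => i _; case: (Q i). Qed.

Lemma coefM_last (R : nzRingType) (p q : {poly R}) (i j : nat) :
  (size p <= i.+1)%N -> (size q <= j.+1)%N -> (p * q)`_(i + j) = p`_i * q`_j.
Proof.
move=> Hp Hq; rewrite coefM.
have Hi : (i < (i + j).+1)%N by rewrite ltnS leq_addr.
rewrite (bigD1 (Ordinal Hi)) //= addKn big1 ?addr0 // => k Hk.
have : (k : nat) != i by apply: contraNneq Hk => Eki; apply/eqP/val_inj.
rewrite neq_ltn => /orP[Hlt|Hgt].
  by rewrite [q`_ _]nth_default ?mulr0 //; apply: leq_trans Hq _; lia.
by rewrite [p`_ _]nth_default ?mul0r //; apply: leq_trans Hp _.
Qed.

Section Blowup.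
Variables (T1 T : finType) (e1 : rel T1) (e : rel T).

Definition esum : rel (T1 + T) := fun a b =>
  match a, b with inl x, inl y => e1 x y | inr x, inr y => e x y | _, _ => false end.

Lemma esum_sym : symmetric e1 -> symmetric e -> symmetric esum.
Proof. by move=> sym1 sym [x|x] [y|y] //=. Qed.

Lemma esum_irr : irreflexive e1 -> irreflexive e -> irreflexive esum.
Proof. by move=> irr1 irr [x|x] /=. Qed.

Definition blow_proj (a : nat) (y : (T1 * 'I_a) + T) : T1 + T :=
  match y with inl p => inl p.1 | inr t => inr t end.

(* The disjoint union of [e] with the blow-up of [e1] in which every vertex
   becomes an independent set of [a] twins. *)
Definition eblow (a : nat) : rel ((T1 * 'I_a) + T) :=
  fun u v => esum (blow_proj u) (blow_proj v).

Definition is_left (y : T1 + T) : bool := if y is inl _ then true else false.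

Definition nleft (n : nat) (phi : {ffun 'I_n -> T1 + T}) : nat := #|[pred u | is_left (phi u)]|.

Lemma card_blow_fiber (a : nat) (z : T1 + T) :
  #|[pred y : (T1 * 'I_a) + T | blow_proj y == z]| = if is_left z then a else 1%N.
Proof.
case: z => [x|t] /=; last first.
  rewrite -(card1 (inr t : (T1 * 'I_a) + T)); apply: eq_card => y; rewrite !inE.
  by case: y => [[x' i]|t'].
rewrite -[RHS](card_ord a) -(card_imset _ (f := fun i => inl (x, i) : (T1 * 'I_a) + T));
  last by move=> i j [].
apply: eq_card => y; rewrite !inE; apply/idP/imsetP => [|[i _ ->]] //.
by case: y => [[x' i]|t] //= /eqP [->]; exists i.
Qed.

(* A homomorphism into the blow-up is a homomorphism [phi] into the disjoint
   union together with an independent choice of twin for each vertex sent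
   into [e1]. *)
Lemma nhom_blowup (a : nat) (H : plg) :
  nhom H (@eblow a) = (\sum_(phi : {ffun 'I_(nv H) -> T1 + T} | homb esum phi) a ^ nleft phi)%N.
Proof.
pose pj (f : {ffun 'I_(nv H) -> (T1 * 'I_a) + T}) : {ffun 'I_(nv H) -> T1 + T} :=
  [ffun u => blow_proj (f u)].
have homb_pj f : homb (@eblow a) f = homb esum (pj f).
  by apply: eq_forallb => u; apply: eq_forallb => v; rewrite !ffunE.
rewrite /nhom -sum1_card (partition_big pj (homb esum)) => [|f]; last by rewrite inE homb_pj.
apply: eq_bigr => phi homphi.
transitivity #|family (fun u => [pred y : (T1 * 'I_a) + T | blow_proj y == phi u])|.
  rewrite sum1dep_card; apply: eq_card => f; rewrite !inE homb_pj.
  apply/andP/familyP => [[_ /eqP <-] u|pjf]; first by rewrite !inE ffunE.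
  have -> : pj f = phi by apply/ffunP => u; rewrite ffunE; apply/eqP; exact: pjf.
  by rewrite homphi.
rewrite card_family foldrE big_map big_enum /= /nleft -prod_nat_const [RHS]big_mkcond /=.
by apply: eq_bigr => u _; rewrite card_blow_fiber inE.
Qed.

Variable R : realType.

Definition hom_poly (H : plg) : {poly R} :=
  \sum_(phi : {ffun 'I_(nv H) -> T1 + T} | homb esum phi) 'X^(nleft phi).

Lemma hom_polyE (H : plg) (a : nat) : (hom_poly H).[a%:R] = (nhom H (@eblow a))%:R.
Proof.
rewrite /hom_poly horner_sum nhom_blowup natr_sum; apply: eq_bigr => phi _.
by rewrite hornerXn natrX.
Qed.

Lemma size_hom_poly (H : plg) : (size (hom_poly H) <= (nv H).+1)%N.
Proof.
apply: leq_trans (size_sum _ _ _) _; apply/bigmax_leqP_seq => phi _ _.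
by rewrite size_polyXn ltnS; apply: leq_trans (max_card _) _; rewrite card_ord.
Qed.

Lemma coef0_hom_poly (H : plg) : (hom_poly H)`_0 = (nhom H e)%:R.
Proof.
rewrite /hom_poly coef_sum; under eq_bigr do rewrite coefXn.
rewrite -natr_sum sum_bool_card; congr (_%:R).
rewrite -(@nhom_embed H _ _ e esum inr (fun y => ~~ is_left y)) //.
- apply: eq_card => phi; rewrite !inE; congr andb.
  by rewrite eq_sym eq_card0_forall; apply: eq_forallb => u; rewrite !inE.
- by move=> x y [].
- by move=> [y|y] // _; exists y.
Qed.

Lemma coef_hom_poly_nv (H : plg) : (hom_poly H)`_(nv H) = (nhom H e1)%:R.
Proof.
rewrite /hom_poly coef_sum; under eq_bigr do rewrite coefXn.
rewrite -natr_sum sum_bool_card; congr (_%:R).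
rewrite -(@nhom_embed H _ _ e1 esum inl is_left) //.
- apply: eq_card => phi; rewrite !inE; congr andb.
  have := eq_cardT_forall [pred u : 'I_(nv H) | is_left (phi u)]; rewrite card_ord.
  by rewrite eq_sym /nleft => ->; apply: eq_forallb => u; rewrite !inE.
- by move=> x y [].
- by move=> [y|y] // _; exists y.
Qed.

End Blowup.

Arguments eblow {T1 T} e1 e a.

Lemma poly_eventually_lt0 (R : realType) (p : {poly R}) :
  lead_coef p < 0 -> exists A : nat, forall a, (A <= a)%N -> p.[a%:R] < 0.
Proof.
move=> lc_lt0; have lcN_gt0 : 0 < lead_coef (- p) by rewrite lead_coefN oppr_gt0.
have [n0 Hn0] := poly_pinfty_gt_lc lcN_gt0.
exists (Num.Def.archi_bound `|n0|) => a Aa; rewrite -oppr_gt0 -hornerN.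
apply: (lt_le_trans lcN_gt0 (Hn0 _ _)).
apply: le_trans (ler_norm n0) _; apply/ltW/(lt_le_trans (archi_boundP (normr_ge0 n0))).
by rewrite ler_nat.
Qed.

Lemma poly_eventually_root_eq0 (R : numDomainType) (p : {poly R}) (A : nat) :
  (forall a, (A <= a)%N -> root p a%:R) -> p = 0.
Proof.
move=> roots; apply: contraTeq isT => p_neq0.
have := max_poly_roots p_neq0 (rs := [seq (A + i)%:R | i <- iota 0 (size p)]).
rewrite size_map size_iota ltnn; apply.
  by apply/allP => y /mapP [i _ ->]; apply: roots; exact: leq_addr.
by rewrite map_inj_uniq ?iota_uniq // => i j /eqP; rewrite eqr_nat eqn_add2l => /eqP.
Qed.

Section BlowupPoly.
Variables (T1 T : finType) (e1 : rel T1) (e : rel T) (R : realType).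

(* The number of vertices [|T1| a + |T|] of the blow-up, as a polynomial in [a]. *)
Definition card_blow_poly : {poly R} := #|T1|%:R *: 'X + (#|T|%:R)%:P.

(* [(|T1| a + |T|)^K t(s; G_a)] as a polynomial in [a], for [K] at least the
   number of vertices of every graph in [s]. *)
Definition tval_poly (s : @fsum R) (K : nat) : {poly R} :=
  \sum_(p <- s) p.1 *: (hom_poly e1 e R p.2 * card_blow_poly ^+ (K - nv p.2)).

Lemma size_card_blow_poly : (size card_blow_poly <= 2)%N.
Proof.
apply: leq_trans (size_polyD _ _) _; rewrite geq_max; apply/andP; split.
  by apply: leq_trans (size_scale_leq _ _) _; rewrite size_polyX.
exact: leq_trans (size_polyC_leq1 _) _.
Qed.

Lemma size_card_blow_poly_exp (m : nat) : (size (card_blow_poly ^+ m) <= m.+1)%N.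
Proof.
elim: m => [|m IH]; first by rewrite expr0 size_poly1.
rewrite exprSr; apply: leq_trans (size_polyMleq _ _) _.
by have := size_card_blow_poly; lia.
Qed.

Lemma coef_card_blow_poly_exp (m : nat) : (card_blow_poly ^+ m)`_m = #|T1|%:R ^+ m.
Proof.
elim: m => [|m IH]; first by rewrite !expr0 coef1.
rewrite exprSr -addn1 (coefM_last (size_card_blow_poly_exp m) size_card_blow_poly) IH.
by rewrite /card_blow_poly coefD coefZ coefX coefC mulr1 addr0 addn1 exprSr.
Qed.

Lemma coef0_card_blow_poly_exp (m : nat) : (card_blow_poly ^+ m)`_0 = #|T|%:R ^+ m.
Proof.
elim: m => [|m IH]; first by rewrite !expr0 coef1.
by rewrite !exprSr coef0M IH /card_blow_poly coefD coefZ coefX coefC mulr0 add0r.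
Qed.

Section VertexBound.
Variables (s : @fsum R) (K : nat).
Hypothesis nv_le : forall p, List.In p s -> (nv p.2 <= K)%N.

Lemma tval_polyE (a : nat) : (0 < #|T|)%N ->
  (tval_poly s K).[a%:R] = (#|T1| * a + #|T|)%:R ^+ K * Defs.tval s (eblow e1 e a).
Proof.
move=> T_gt0; rewrite horner_sum /Defs.tval mulr_sumr; apply: eq_big_In => p Hp.
rewrite hornerZ hornerM hom_polyE horner_exp hornerD hornerZ hornerX hornerC tdensE.
rewrite card_sum card_prod card_ord natrX -(subnK (nv_le Hp)) exprD natrD natrM.
have N_neq0 : (#|T1|%:R * a%:R + #|T|%:R) ^+ nv p.2 != 0 :> R.
  by rewrite expf_neq0 // -natrM -natrD pnatr_eq0 -lt0n ltn_addl.
by rewrite subnK ?nv_le //; field.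
Qed.

Lemma size_tval_poly : (size (tval_poly s K) <= K.+1)%N.
Proof.
rewrite /tval_poly; elim: s nv_le => [|p s' IH] le_s; first by rewrite big_nil size_poly0.
rewrite big_cons; apply: leq_trans (size_polyD _ _) _; rewrite geq_max; apply/andP; split.
  apply: leq_trans (size_scale_leq _ _) _; apply: leq_trans (size_polyMleq _ _) _.
  have := size_hom_poly e1 e R p.2; have := size_card_blow_poly_exp (K - nv p.2).
  by have := le_s p (or_introl erefl); lia.
by apply: IH => q Hq; apply: le_s; right.
Qed.

Lemma coef_tval_poly (T1_gt0 : (0 < #|T1|)%N) :
  (tval_poly s K)`_K = #|T1|%:R ^+ K * Defs.tval s e1.
Proof.
rewrite coef_sum /Defs.tval mulr_sumr; apply: eq_big_In => p Hp; rewrite coefZ.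
have -> : (hom_poly e1 e R p.2 * card_blow_poly ^+ (K - nv p.2))`_K =
    (hom_poly e1 e R p.2)`_(nv p.2) * (card_blow_poly ^+ (K - nv p.2))`_(K - nv p.2).
  by rewrite -(coefM_last (size_hom_poly _ _ _ _) (size_card_blow_poly_exp _)) subnKC ?nv_le.
rewrite coef_hom_poly_nv coef_card_blow_poly_exp tdensE natrX -{2}(subnK (nv_le Hp)) exprD.
have N_neq0 : #|T1|%:R ^+ nv p.2 != 0 :> R by rewrite expf_neq0 // pnatr_eq0 -lt0n.
by field.
Qed.

Lemma coef0_tval_poly (T_gt0 : (0 < #|T|)%N) :
  (tval_poly s K)`_0 = #|T|%:R ^+ K * Defs.tval s e.
Proof.
rewrite coef_sum /Defs.tval mulr_sumr; apply: eq_big_In => p Hp.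
rewrite coefZ coef0M coef0_hom_poly coef0_card_blow_poly_exp tdensE natrX.
rewrite -{2}(subnK (nv_le Hp)) exprD.
have N_neq0 : #|T|%:R ^+ nv p.2 != 0 :> R by rewrite expf_neq0 // pnatr_eq0 -lt0n.
by field.
Qed.

End VertexBound.
End BlowupPoly.

Definition max_nv (R : realType) (s : @fsum R) : nat :=
  foldr (fun p m => maxn (nv p.2) m) 0%N s.

Lemma max_nv_ge (R : realType) (s : @fsum R) (p : R * plg) :
  List.In p s -> (nv p.2 <= max_nv s)%N.
Proof.
elim: s => [|q s IH] //= [->|/IH le_p]; first by rewrite leq_maxl.
exact: leq_trans le_p (leq_maxr _ _).
Qed.

Section NegativeCofactor.
Variables (R : realType) (x g h : @fsum R).
Hypotheses (x_in : inF0 x) (g_in : inF0 g) (h_in : inF0 h).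
Hypotheses (g_pos : positive g) (h_pos : positive h) (gxh : inK (subF (mulF g x) h)).
Variables (T1 : finType) (e1 : rel T1).
Hypotheses (e1_sym : symmetric e1) (e1_irr : irreflexive e1) (T1_gt0 : (0 < #|T1|)%N).
Hypothesis x_neg : Defs.tval x e1 < 0.
Variables (T : finType) (e : rel T).
Hypotheses (e_sym : symmetric e) (e_irr : irreflexive e) (T_gt0 : (0 < #|T|)%N).

Let card_blowup_gt0 (a : nat) : (0 < #|{: (T1 * 'I_a) + T}|)%N.
Proof. by rewrite card_sum ltn_addl. Qed.

Let eblow_sym (a : nat) : symmetric (eblow e1 e a).
Proof. by move=> u v; rewrite /eblow esum_sym. Qed.

Let eblow_irr (a : nat) : irreflexive (eblow e1 e a).
Proof. by move=> u; rewrite /eblow esum_irr. Qed.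

Lemma tval_blowup_eventually_lt0 :
  exists A : nat, forall a, (A <= a)%N -> Defs.tval x (eblow e1 e a) < 0.
Proof.
pose K := max_nv x; have nv_le := @max_nv_ge _ x.
pose Qx := tval_poly e1 e x K.
have QxK : Qx`_K < 0 by rewrite coef_tval_poly // pmulr_rlt0 // exprn_gt0 ?ltr0n.
have size_Qx : size Qx = K.+1.
  apply/eqP; rewrite eqn_leq size_tval_poly //=; apply: contraT; rewrite -leqNgt => Hs.
  by move: QxK; rewrite nth_default // ltxx.
have lcQx : lead_coef Qx < 0 by rewrite lead_coefE size_Qx.
have [A HA] := poly_eventually_lt0 lcQx.
exists A => a /HA; rewrite tval_polyE //.
by rewrite pmulr_rlt0 // exprn_gt0 // ltr0n ltn_addl.
Qed.

(* For large [a], t(x; G_a) < 0 while t(g; G_a) t(x; G_a) = t(h; G_a) >= 0 and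
   t(g; G_a) >= 0. *)
Lemma tval_blowup_eventually_eq0 :
  exists A : nat, forall a, (A <= a)%N -> Defs.tval g (eblow e1 e a) = 0.
Proof.
have [A HA] := tval_blowup_eventually_lt0; exists A => a /HA x_neg_a.
have := tval_mul_of_inK (eblow e1 e a) x_in g_in h_in gxh (card_blowup_gt0 a).
have := g_pos (@eblow_sym a) (@eblow_irr a) (card_blowup_gt0 a).
have := h_pos (@eblow_sym a) (@eblow_irr a) (card_blowup_gt0 a).
by nra.
Qed.

Lemma tval_eq0_of_neg_cofactor : Defs.tval g e = 0.
Proof.
pose K := max_nv g; have nv_le := @max_nv_ge _ g.
have [A HA] := tval_blowup_eventually_eq0.
have Qg0 : tval_poly e1 e g K = 0.
  apply: (poly_eventually_root_eq0 (A := A)) => a /HA tval_a.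
  by rewrite /root tval_polyE // tval_a mulr0.
have := coef0_tval_poly e1 e nv_le T_gt0; rewrite Qg0 coef0 => /esym/eqP.
by rewrite mulf_eq0 expf_eq0 pnatr_eq0 (negbTE (lt0n_neq0 T_gt0)) andbF => /eqP.
Qed.

End NegativeCofactor.

Definition nedges (H : plg) : nat :=
  #|[set uv : 'I_(nv H) * 'I_(nv H) | edgeb H uv.1 uv.2]|.

Definition edge_rel (F : plg) : rel 'I_(nv F) := fun a b => edgeb F a b.
Arguments edge_rel : clear implicits.

Lemma surjb_inj (n : nat) (f : {ffun 'I_n -> 'I_n}) : surjb f -> injective f.
Proof.
move=> /forallP f_surj.
have : #|[seq f x | x in 'I_n]| == #|'I_n|.
  apply/eqP/eq_card => y; rewrite !inE.
  by have /existsP [x /eqP <-] := f_surj y; rewrite image_f.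
by move/image_injP => f_inj x y; exact: f_inj.
Qed.

(* A surjective homomorphism between graphs with the same vertex count is a
   bijection, so it can only add edges; if it adds none it is an isomorphism. *)
Lemma surj_hom_nedges (H F : plg) (f : {ffun 'I_(nv H) -> 'I_(nv F)}) :
  nv H = nv F -> unlabeled H -> unlabeled F -> homb (edge_rel F) f -> surjb f ->
  (nedges H <= nedges F)%N /\ (nedges H = nedges F -> isob H F).
Proof.
case: H f => [m a' l'] /=; case: F => [n a l] /= f E; subst m => unlH unlF homf surjf.
set H := PLG n a' l' in unlH homf *; set F := PLG n a l in unlF homf *.
have f_inj := surjb_inj surjf.
pose ff (uv : 'I_n * 'I_n) := (f uv.1, f uv.2).
have ff_inj : injective ff by move=> [u v] [u' v'] [/f_inj -> /f_inj ->].
have EH_sub : ff @: [set uv : 'I_n * 'I_n | edgeb H uv.1 uv.2] \subset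
              [set uv : 'I_n * 'I_n | edgeb F uv.1 uv.2].
  apply/subsetP => z /imsetP [[u v]]; rewrite inE /= => Huv ->; rewrite inE /=.
  exact: (implyP (forallP (forallP homf u) v) Huv).
have card_ff := card_imset [set uv : 'I_n * 'I_n | edgeb H uv.1 uv.2] ff_inj.
split=> [|Enedges]; first by rewrite /nedges -card_ff; apply: subset_leq_card.
have EH_eq : ff @: [set uv : 'I_n * 'I_n | edgeb H uv.1 uv.2] =
             [set uv : 'I_n * 'I_n | edgeb F uv.1 uv.2].
  by apply/eqP; rewrite eqEcard EH_sub /= card_ff; move: Enedges; rewrite /nedges => ->.
apply/andP; split => //; apply/existsP; exists (perm f_inj); apply/forallP => u.
have labH (w : 'I_n) : l' w = None := unlH w (ltn_ord w).
have labF (w : 'I_n) : l w = None := unlF w (ltn_ord w).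
rewrite permE /= labH labF eqxx /=; apply/forallP => v; rewrite permE.
apply/eqP; apply/idP/idP => [Fuv|]; last exact: (implyP (forallP (forallP homf u) v)).
have : (f u, f v) \in ff @: [set uv : 'I_n * 'I_n | edgeb H uv.1 uv.2] by rewrite EH_eq inE.
by case/imsetP => [[u' v']]; rewrite inE /= => Huv [/f_inj -> /f_inj ->].
Qed.

Section InclusionExclusion.
Variables (R : realType) (n : nat).

Definition sign_weight (chi : {ffun 'I_n -> bool}) : R :=
  \prod_(i : 'I_n) (if chi i then 1 else -1).

Lemma incl_excl_surjb (m : nat) (f : {ffun 'I_m -> 'I_n}) :
  \sum_(chi : {ffun 'I_n -> bool}) sign_weight chi * ([forall u, chi (f u)] : nat)%:R =
  (surjb f : nat)%:R.
Proof.
pose w (i : 'I_n) (b : bool) : R := if b then 1 else if [exists u, f u == i] then 0 else -1.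
transitivity (\sum_(chi : {ffun 'I_n -> bool}) \prod_(i : 'I_n) w i (chi i)).
  apply: eq_bigr => chi _; rewrite /sign_weight.
  case: (boolP [forall u, chi (f u)]) => [img_chi|/forallPn [u chi_fu]] /=.
    rewrite mulr1; apply: eq_bigr => i _; rewrite /w; case chi_i: (chi i) => //.
    case: (boolP [exists u, f u == i]) => // /existsP [u /eqP Eu].
    by move: chi_i; rewrite -Eu (forallP img_chi u).
  rewrite mulr0 (bigD1 (f u)) //= /w (negbTE chi_fu).
  have -> : [exists u0, f u0 == f u] by apply/existsP; exists u.
  by rewrite mul0r.
rewrite -bigA_distr_bigA /=.
transitivity (\prod_(i : 'I_n) ([exists u, f u == i] : nat)%:R : R).
  apply: eq_bigr => i _; rewrite big_bool /w /=.
  by case: [exists u, f u == i]; rewrite /= ?addr0 ?subrr.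
case: (boolP (surjb f)) => [f_surj|/forallPn [i /negbTE i_out]] /=.
  by apply: big1 => i _; rewrite (forallP f_surj i).
by rewrite (bigD1 i) //= i_out mul0r.
Qed.

Variable eF : rel 'I_n.

Definition nhom_in (H : plg) (chi : {ffun 'I_n -> bool}) : nat :=
  #|[pred f : {ffun 'I_(nv H) -> 'I_n} | homb eF f && [forall u, chi (f u)]]|.

Lemma incl_excl_nhomS (H : plg) :
  \sum_(chi : {ffun 'I_n -> bool}) sign_weight chi * (nhom_in H chi)%:R =
  (nhomS H eF true)%:R.
Proof.
have nhom_inE chi : (nhom_in H chi)%:R =
    \sum_(f : {ffun 'I_(nv H) -> 'I_n} | homb eF f) ([forall u, chi (f u)] : nat)%:R :> R.
  by rewrite -natr_sum sum_bool_card.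
have -> : (nhomS H eF true)%:R =
    \sum_(f : {ffun 'I_(nv H) -> 'I_n} | homb eF f) (surjb f : nat)%:R :> R.
  by rewrite -natr_sum sum_bool_card.
under eq_bigr do rewrite nhom_inE mulr_sumr.
by rewrite exchange_big /=; apply: eq_bigr => f _; exact: incl_excl_surjb.
Qed.

End InclusionExclusion.

Lemma nhomS_self_gt0 (F : plg) : (0 < nhomS F (edge_rel F) true)%N.
Proof.
apply/card_gt0P; exists [ffun u => u]; rewrite inE /=; apply/andP; split.
  by apply/forallP => u; apply/forallP => v; rewrite !ffunE; apply/implyP.
by apply/forallP => y; apply/existsP; exists y; rewrite ffunE.
Qed.

Section Lovasz.
Variables (R : realType) (s : @fsum R) (N : nat).
Hypothesis N_gt0 : (0 < N)%N.
Hypothesis s_nv : forall p, List.In p s -> unlabeled p.2 /\ nv p.2 = N.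
Hypothesis nhom_sum_eq0 : forall (T : finType) (e : rel T),
  symmetric e -> irreflexive e -> (0 < #|T|)%N -> \sum_(p <- s) p.1 * (nhom p.2 e)%:R = 0.

(* Homomorphisms with image inside [chi] are homomorphisms into the subgraph
   induced on [chi]; when [chi] is empty there are none, as [N > 0]. *)
Lemma sum_nhom_in_eq0 (n : nat) (eF : rel 'I_n) (chi : {ffun 'I_n -> bool}) :
  symmetric eF -> irreflexive eF -> \sum_(q <- s) q.1 * (nhom_in eF q.2 chi)%:R = 0.
Proof.
move=> eF_sym eF_irr; have [/existsP [y0 chi_y0]|chi_empty] := boolP [exists y, chi y].
  pose T' : finType := {y : 'I_n | chi y}.
  pose e' (a b : T') := eF (val a) (val b).
  have T'_gt0 : (0 < #|T'|)%N by apply/card_gt0P; exists (exist _ y0 chi_y0).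
  have e'_sym : symmetric e' by move=> a b; exact: eF_sym.
  have e'_irr : irreflexive e' by move=> a; exact: eF_irr.
  rewrite -[RHS](nhom_sum_eq0 e'_sym e'_irr T'_gt0).
  apply: eq_big_In => q Hq; congr (_ * _%:R).
  apply: (@nhom_embed q.2 T' _ e' eF val (fun y => chi y)) => //.
  - exact: val_inj.
  - by move=> [y Hy].
  - by move=> y Hy; exists (exist _ y Hy).
transitivity (\sum_(q <- s) (0 : R)); last by rewrite big1.
apply: eq_big_In => q Hq.
have nv_gt0 : (0 < nv q.2)%N by rewrite (s_nv Hq).2.
rewrite /nhom_in eq_card0 ?mulr0 // => f; rewrite !inE; apply/negbTE/negP => /andP [_ /forallP chi_f].
by move/existsPn: chi_empty => /(_ (f (Ordinal nv_gt0))); rewrite chi_f.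
Qed.

Lemma sum_nhomS_surj_eq0 (n : nat) (eF : rel 'I_n) :
  symmetric eF -> irreflexive eF -> \sum_(q <- s) q.1 * (nhomS q.2 eF true)%:R = 0.
Proof.
move=> eF_sym eF_irr.
under eq_bigr do rewrite -(incl_excl_nhomS R eF) mulr_sumr.
rewrite exchange_big /= big1 // => chi _.
under eq_bigr do rewrite mulrCA.
by rewrite -mulr_sumr sum_nhom_in_eq0 ?mulr0.
Qed.

(* Induction on the number of edges of [F]: the surjective-homomorphism counts
   into [F] see only graphs of [s] that are isomorphic to [F] or have fewer
   edges. *)
Lemma coef_eq0_nedges (k : nat) (p : R * plg) :
  List.In p s -> nedges p.2 = k -> coef s p.2 = 0.
Proof.
elim/ltn_ind: k p => k IH p Hp Ek; set F := p.2.
pose phi (H : plg) : R := (nhomS H (edge_rel F) true)%:R.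
have phi_isob H J : isob H J -> phi H = phi J by move=> HJ; rewrite /phi (nhomS_isob _ _ HJ).
have : \sum_(q <- s) q.1 * phi q.2 = 0.
  by apply: sum_nhomS_surj_eq0 => [a b|a]; [exact: edgeb_sym | exact: edgeb_irr].
rewrite (sum_by_isoclass phi_isob (S := s)) //.
have term_iso q : List.In q s -> coef s q.2 * phi q.2 / (nisob s q.2)%:R =
    if isob q.2 F then coef s F * phi F / (nisob s F)%:R else 0.
  move=> Hq; case: ifP => qF.
    by rewrite (coef_isob s qF) (phi_isob _ _ qF) -(nisob_isob s qF).
  have [->|/negbTE phi_neq0] := eqVneq (phi q.2) 0; first by rewrite mulr0 mul0r.
  move: phi_neq0; rewrite /phi pnatr_eq0 => /negbT; rewrite -lt0n.
  move=> /card_gt0P [f]; rewrite inE => /andP [homf surjf].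
  have Env : nv q.2 = nv F by rewrite (s_nv Hq).2 (s_nv Hp).2.
  have [le_edges eq_iso] := surj_hom_nedges Env (s_nv Hq).1 (s_nv Hp).1 homf surjf.
  have lt_edges : (nedges q.2 < k)%N.
    by rewrite -Ek ltn_neqAle le_edges andbT; apply: contraFN qF => /eqP; exact: eq_iso.
  by rewrite (IH _ lt_edges q Hq erefl) !mul0r.
rewrite (eq_big_In term_iso) sum_if_const -/(nisob s F) mulfVK; last first.
  by rewrite pnatr_eq0 -lt0n; apply: (count_In_gt0 Hp); exact: isob_refl.
move=> /eqP; rewrite mulf_eq0 /phi pnatr_eq0 (negbTE (lt0n_neq0 (nhomS_self_gt0 F))).
by rewrite orbF => /eqP.
Qed.

Lemma lovasz_coef_eq0 (J : plg) : coef s J = 0.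
Proof.
have [/has_In [q [Hq qJ]]|no_iso] := boolP (has (fun q : R * plg => isob q.2 J) s).
  by rewrite -(coef_isob s qJ); exact: coef_eq0_nedges Hq erefl.
by rewrite /coef big_hasC.
Qed.

End Lovasz.

Definition pad (k : nat) (F : plg) : plg := iter k (fun H => gmul H (vtx None)) F.

Lemma unlabeled_pad (k : nat) (F : plg) : unlabeled F -> unlabeled (pad k F).
Proof. by move=> unlF; elim: k => [|k IH] //; exact: unlabeled_gmul. Qed.

Lemma nv_pad (k : nat) (F : plg) : nv (pad k F) = (nv F + k)%N.
Proof.
elim: k => [|k IH]; first by rewrite addn0.
by rewrite [pad _ _]/= (@gmul_nv _ (vtx None)) // IH addn1 addnS.
Qed.

Lemma tdens_pad (R : realType) (k : nat) (F : plg) (T : finType) (e : rel T) :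
  (0 < #|T|)%N -> @tdens R (pad k F) T e = @tdens R F T e.
Proof. by move=> T0; elim: k => [|k IH] //=; rewrite tdens_gmul_vtx. Qed.

Definition isob_ind (R : realType) (H J : plg) : R := if isob H J then 1 else 0.

Lemma coef_isob_indE (R : realType) (s : @fsum R) (J : plg) :
  coef s J = \sum_(p <- s) p.1 * isob_ind R p.2 J.
Proof.
rewrite /coef big_mkcond; apply: eq_bigr => p _.
by rewrite /isob_ind; case: ifP; rewrite ?mulr1 ?mulr0.
Qed.

Lemma coef_cat (R : realType) (s1 s2 : @fsum R) (J : plg) :
  coef (s1 ++ s2) J = coef s1 J + coef s2 J.
Proof. by rewrite /coef big_cat. Qed.

Lemma coef_Kgen (R : realType) (gens : seq (R * plg * option nat)) (J : plg) :
  coef (Kgen gens) J =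
  \sum_(q <- gens) q.1.1 * (isob_ind R (gmul q.1.2 (vtx q.2)) J - isob_ind R q.1.2 J).
Proof.
elim: gens => [|q gens IH]; first by rewrite /coef !big_nil.
rewrite Kgen_cons coef_cat IH coef_isob_indE !big_cons big_nil /=.
have -> : isob_ind R (gmul q.1.2 g0) J = isob_ind R q.1.2 J.
  have Eg0 := gmul_g0_isob q.1.2; rewrite /isob_ind.
  case: ifP => [H0|H0]; case: ifP => [H1|H1] //.
    by move: H1; rewrite (isob_trans (isob_sym Eg0) H0).
  by move: H0; rewrite (isob_trans Eg0 H1).
by rewrite addr0 !mulr1; ring.
Qed.

Definition pad_seq (R : realType) (d : R * plg -> nat) (s : @fsum R) : @fsum R :=
  [seq (p.1, pad (d p) p.2) | p <- s].

(* Each generator adds one isolated vertex, so the combination telescopes to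
   [s - pad_seq d s]. *)
Definition pad_gens (R : realType) (d : R * plg -> nat) (s : @fsum R) :
    seq (R * plg * option nat) :=
  flatten [seq [seq (- p.1, pad j p.2, None) | j <- iota 0 (d p)] | p <- s].

Lemma coef_pad_gens (R : realType) (d : R * plg -> nat) (s : @fsum R) (J : plg) :
  coef (Kgen (pad_gens d s)) J = coef s J - coef (pad_seq d s) J.
Proof.
rewrite coef_Kgen big_flatten /= big_map !coef_isob_indE big_map -sumrB.
apply: eq_bigr => p _ /=; rewrite big_map -mulr_sumr.
have -> : iota 0 (d p) = index_iota 0 (d p) by rewrite /index_iota subn0.
by rewrite (telescope_sumr (fun j => isob_ind R (pad j p.2) J)) //=; ring.
Qed.

Lemma wf_pad_gens (R : realType) (d : R * plg -> nat) (s : @fsum R) : inF0 s ->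
  forall q, List.In q (pad_gens d s) -> wf q.1.2 /\ wf (vtx q.2).
Proof.
move=> s_in q /List.in_flat_map [l [/List.in_map_iff [p [<- Hp]]]].
move=> /List.in_map_iff [j [<- _]] /=; split; last exact: unlabeled_wf.
exact/unlabeled_wf/unlabeled_pad/(s_in _ Hp).2.
Qed.

Lemma tval_eq0_inK (R : realType) (g : @fsum R) : inF0 g ->
  (forall (T : finType) (e : rel T), symmetric e -> irreflexive e -> (0 < #|T|)%N ->
     Defs.tval g e = 0) -> inK g.
Proof.
move=> g_in tval_g0.
pose N := (max_nv g).+1; pose d (p : R * plg) := (N - nv p.2)%N.
have g'_nv p : List.In p (pad_seq d g) -> unlabeled p.2 /\ nv p.2 = N.
  move=> /List.in_map_iff [q [<- Hq]] /=; split; first exact/unlabeled_pad/(g_in _ Hq).2.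
  by rewrite nv_pad subnKC // ltnW // ltnS max_nv_ge.
have nhom_g' (T : finType) (e : rel T) : symmetric e -> irreflexive e -> (0 < #|T|)%N ->
    \sum_(p <- pad_seq d g) p.1 * (nhom p.2 e)%:R = 0.
  move=> e_sym e_irr T_gt0.
  have : Defs.tval (pad_seq d g) e = 0.
    rewrite -(tval_g0 _ _ e_sym e_irr T_gt0) /Defs.tval big_map.
    by apply: eq_bigr => p _ /=; rewrite tdens_pad.
  have -> : Defs.tval (pad_seq d g) e =
      (\sum_(p <- pad_seq d g) p.1 * (nhom p.2 e)%:R) / (#|T| ^ N)%:R.
    rewrite mulr_suml; apply: eq_big_In => p Hp.
    by rewrite tdensE (g'_nv p Hp).2 mulrA.
  move/eqP; rewrite mulf_eq0 invr_eq0 pnatr_eq0 expn_eq0 (negbTE (lt0n_neq0 T_gt0)).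
  by rewrite andFb orbF => /eqP.
exists (pad_gens d g); split; first exact: wf_pad_gens.
move=> J _; rewrite coef_pad_gens (lovasz_coef_eq0 (ltn0Sn _) g'_nv nhom_g').
by rewrite subr0.
Qed.

Theorem lemma2p3 (R : realType) (x g h : @fsum R) :
  inF0 x -> inF0 g -> inF0 h ->
  positive g -> positive h ->
  ~ inK g ->
  inK (subF (mulF g x) h) ->
  positive x.
Proof.
move=> x_in g_in h_in g_pos h_pos g_notK gxh T1 e1 e1_sym e1_irr T1_gt0.
rewrite leNgt; apply/negP => x_neg; apply/g_notK/(tval_eq0_inK g_in) => T e e_sym e_irr T_gt0.
exact: (tval_eq0_of_neg_cofactor x_in g_in h_in g_pos h_pos gxh e1_sym e1_irr T1_gt0 x_neg).
Qed.
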